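(* Let $A,C\in\mathbb{C}^{n\times n}$ be Hermitian positive semidefinite. Then $\|I+AC\|\ge 1$, and equality holds if and only if $AC=0$.
   Context: $\|\cdot\|$ is the spectral (operator) norm. *)

From HB Require Import structures.
From mathcomp Require Import all_boot all_order all_algebra.
From mathcomp Require Import complex.
From mathcomp Require Import classical_sets reals.
Set Implicit Arguments. Unset Strict Implicit. Unset Printing Implicit Defensive.
Import Order.TTheory GRing.Theory Num.Theory.
Local Open Scope ring_scope.
Local Open Scope classical_set_scope.

Definition ctrmx {R : realType} m n (M : 'M[R[i]]_(m, n)) : 'M[R[i]]_(n, m) :=
  (map_mx conjc M)^T.

Definition hermitian {R : realType} n (M : 'M[R[i]]_n) : Prop := ctrmx M = M.

(* Hermitian positive semidefinite: Hermitian and x^* M x >= 0 for all x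
   (the order on R[i] is the canonical one: 0 <= z iff z is real and >= 0). *)
Definition psd {R : realType} n (M : 'M[R[i]]_n) : Prop :=
  hermitian M /\ forall x : 'cV[R[i]]_n, 0 <= (ctrmx x *m M *m x) 0 0.

Definition vnorm {R : realType} n (x : 'cV[R[i]]_n) : R :=
  Num.sqrt (\sum_(i < n) (complex.Re (x i 0) ^+ 2 + complex.Im (x i 0) ^+ 2)).

Definition spnorm {R : realType} n (M : 'M[R[i]]_n) : R :=
  sup [set vnorm (M *m x) | x in [set x : 'cV[R[i]]_n | vnorm x <= 1]].

From Pilot Require Import Defs.
From HB Require Import structures.
From mathcomp Require Import all_boot all_order all_algebra.
From mathcomp Require Import complex.
From mathcomp Require Import classical_sets reals.
From mathcomp Require Import spectral ring lra.
Import Order.TTheory GRing.Theory Num.Theory.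
Local Open Scope ring_scope.

(* Write N := A C. The j-th column of I + N has squared norm
   1 + 2 Re N_jj + |N e_j|^2. Summed over j, the excesses over 1 add up to
   2 Re tr(AC) + |N|_F^2, which is nonnegative because tr(AC) >= 0 for
   positive semidefinite A and C (diagonalize C by a unitary matrix), and
   positive when N <> 0. Hence some column of I + N has norm >= 1, and norm
   > 1 unless AC = 0; conversely I + 0 = I has norm 1. *)

Lemma sumr_ge0_exists {R : realDomainType} {I : finType} (i0 : I) (F : I -> R) :
  0 <= \sum_i F i -> exists i, 0 <= F i.
Proof.
move=> sum_ge0; apply/existsP; apply: contraLR sum_ge0.
rewrite negb_exists => /forallP F_lt0; rewrite -ltNge.
rewrite -[X in _ < X](@big1_eq R 0 +%R _ (index_enum I) predT).
by apply: ltr_sum => [|i _]; [apply/hasP; exists i0; rewrite ?mem_index_enum | rewrite ltNge].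
Qed.

Lemma sumr_gt0_exists {R : realDomainType} {I : finType} (F : I -> R) :
  0 < \sum_i F i -> exists i, 0 < F i.
Proof.
move=> sum_gt0; apply/existsP; apply: contraLR sum_gt0.
rewrite negb_exists => /forallP F_le0; rewrite -leNgt.
by apply: sumr_le0 => i _; rewrite leNgt.
Qed.

Lemma sqr_le_of_norm_le {R : realDomainType} (u b : R) : `|u| <= b -> u ^+ 2 <= b ^+ 2.
Proof.
move=> u_le_b; rewrite -real_normK ?num_real // ler_sqr ?nnegrE //.
exact: le_trans u_le_b.
Qed.

Section ComplexMatrices.
Local Set Implicit Arguments.
Local Unset Strict Implicit.
Variable R : realType.
Local Notation C := (R[i]).
Local Notation Re := complex.Re.
Local Notation Im := complex.Im.

Lemma ctrmxE m n (M : 'M[C]_(m, n)) : ctrmx M = (M ^t*)%sesqui.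
Proof. by rewrite /ctrmx map_trmx. Qed.

Lemma psd_congr_diag_ge0 n (A P : 'M[C]_n) k :
  psd A -> 0 <= (P *m A *m (P ^t*)%sesqui) k k.
Proof.
move=> [_ A_ge0]; have := A_ge0 (ctrmx (row k P)).
suff -> : (ctrmx (ctrmx (row k P)) *m A *m ctrmx (row k P)) 0 0
   = (P *m A *m (P ^t*)%sesqui) k k by [].
rewrite !mxE; apply: eq_bigr => j _; rewrite !mxE; congr (_ * _).
apply: eq_bigr => l _; rewrite !mxE /=.
by congr (_ * _); case: (P k l) => a b /=; rewrite opprK.
Qed.

Lemma psd_mxtrace_mul_ge0 n (A B : 'M[C]_n) : psd A -> psd B -> 0 <= \tr (A *m B).
Proof.
move=> psdA psdB.
have normalB : B \is normalmx.
  by apply/normalmxP; case: psdB; rewrite /Defs.hermitian ctrmxE => ->.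
have unitP := spectral_unitarymx B; have /orthomx_spectralP B_diag := normalB.
set P := spectralmx B in B_diag unitP; set d := spectral_diag B in B_diag.
have PPt : P *m (P ^t*)%sesqui = 1%:M by apply/unitarymxP.
have dE k : d 0 k = (P *m B *m (P ^t*)%sesqui) k k.
  rewrite B_diag invmx_unitary // !mulmxA PPt mul1mx -mulmxA PPt mulmx1.
  by rewrite mxE eqxx mulr1n.
rewrite B_diag invmx_unitary // !mulmxA mxtrace_mulC !mulmxA mul_mx_diag.
apply: sumr_ge0 => k _; rewrite mxE dE.
by apply: mulr_ge0; apply: psd_congr_diag_ge0.
Qed.

Lemma psd_Re_mxtrace_mul_ge0 n (A B : 'M[C]_n) : psd A -> psd B ->
  0 <= \sum_j Re ((A *m B) j j).
Proof.
move=> psdA psdB; have := psd_mxtrace_mul_ge0 psdA psdB.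
by rewrite lecE => /andP[_]; rewrite /mxtrace raddf_sum.
Qed.

Definition sqnormc (z : C) : R := Re z ^+ 2 + Im z ^+ 2.

Definition sqnorm n (x : 'cV[C]_n) : R := \sum_i sqnormc (x i 0).

Lemma vnormE n (x : 'cV[C]_n) : vnorm x = Num.sqrt (sqnorm x).
Proof. by []. Qed.

Lemma sqnormc_ge0 (z : C) : 0 <= sqnormc z.
Proof. by rewrite addr_ge0 ?sqr_ge0. Qed.

Lemma sqnormc_eq0 (z : C) : (sqnormc z == 0) = (z == 0).
Proof.
by rewrite -(inj_eq (@complexI R)) add_Re2_Im2 expf_eq0 /= normr_eq0.
Qed.

Lemma sqnorm_ge0 n (x : 'cV[C]_n) : 0 <= sqnorm x.
Proof. by apply: sumr_ge0 => i _; apply: sqnormc_ge0. Qed.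

Lemma sqnormc_le_sqnorm n (x : 'cV[C]_n) i : sqnormc (x i 0) <= sqnorm x.
Proof.
by rewrite /sqnorm (bigD1 i) //= lerDl sumr_ge0 // => j _; apply: sqnormc_ge0.
Qed.

Lemma sqnorm_delta n (j : 'I_n) : sqnorm (delta_mx j 0 : 'cV[C]_n) = 1.
Proof.
rewrite /sqnorm (bigD1 j) //= big1 => [|i /negbTE neq_ij]; rewrite /sqnormc !mxE.
  by rewrite !eqxx /= expr1n expr0n !addr0.
by rewrite neq_ij /= expr0n addr0.
Qed.

Lemma vnorm_delta n (j : 'I_n) : vnorm (delta_mx j 0 : 'cV[C]_n) = 1.
Proof. by rewrite vnormE sqnorm_delta sqrtr1. Qed.

Lemma sqnorm_col_add1 n (N : 'M[C]_n) j :
  sqnorm (col j (1%:M + N)) = 1 + (2 * Re (N j j) + sqnorm (col j N)).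
Proof.
rewrite /sqnorm (bigD1 j) //= [in RHS](bigD1 j) //=.
rewrite (eq_bigr (fun i => sqnormc (col j N i 0))) => [|i /negbTE neq_ij]; last first.
  by rewrite !mxE neq_ij mulr0n add0r.
rewrite /sqnormc !mxE eqxx mulr1n raddfD [Im _]raddfD /=.
ring.
Qed.

Lemma frobenius_eq0 n (N : 'M[C]_n) : \sum_j sqnorm (col j N) = 0 -> N = 0.
Proof.
move=> sum_eq0; apply/matrixP => i j.
have col_eq0 : sqnorm (col j N) = 0.
  exact: psumr_eq0P (fun k _ => sqnorm_ge0 _) sum_eq0 _ isT.
have /eqP : sqnormc (col j N i 0) = 0.
  exact: psumr_eq0P (fun k _ => sqnormc_ge0 _) col_eq0 _ isT.
by rewrite sqnormc_eq0 !mxE => /eqP.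
Qed.

Lemma normr_Re_le1 (z : C) : sqnormc z <= 1 -> `|Re z| <= 1.
Proof.
move=> z_le1; rewrite -(@expr_le1 _ 2) // real_normK ?num_real //.
by apply: le_trans z_le1; rewrite lerDl sqr_ge0.
Qed.

Lemma normr_Im_le1 (z : C) : sqnormc z <= 1 -> `|Im z| <= 1.
Proof.
move=> z_le1; rewrite -(@expr_le1 _ 2) // real_normK ?num_real //.
by apply: le_trans z_le1; rewrite lerDr sqr_ge0.
Qed.

Lemma normr_ReM_le (a z : C) : sqnormc z <= 1 -> `|Re (a * z)| <= `|Re a| + `|Im a|.
Proof.
move=> z_le1; move: (normr_Re_le1 z_le1) (normr_Im_le1 z_le1).
case: a z {z_le1} => a b [c d] /= c_le1 d_le1.
by apply: le_trans (ler_normB _ _) _; rewrite !normrM lerD // ler_piMr.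
Qed.

Lemma normr_ImM_le (a z : C) : sqnormc z <= 1 -> `|Im (a * z)| <= `|Re a| + `|Im a|.
Proof.
move=> z_le1; move: (normr_Re_le1 z_le1) (normr_Im_le1 z_le1).
case: a z {z_le1} => a b [c d] /= c_le1 d_le1.
by apply: le_trans (ler_normD _ _) _; rewrite !normrM lerD // ler_piMr.
Qed.

Definition unit_ball_image n (M : 'M[C]_n) : set R :=
  [set vnorm (M *m x) | x in [set x : 'cV[C]_n | vnorm x <= 1]].

Lemma unit_ball_image_ubound n (M : 'M[C]_n) : has_ubound (unit_ball_image M).
Proof.
pose b i := \sum_j (`|Re (M i j)| + `|Im (M i j)|).
exists (Num.sqrt (\sum_i (b i ^+ 2 + b i ^+ 2))) => _ [x x_le1 <-].
rewrite vnormE; apply: ler_wsqrtr; apply: ler_sum => i _.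
have x_le1' : sqnorm x <= 1 by rewrite -(ler_sqrt _ ler01) sqrtr1.
have xj_le1 j : sqnormc (x j 0) <= 1 := le_trans (sqnormc_le_sqnorm x j) x_le1'.
rewrite /sqnormc mxE raddf_sum [Im _]raddf_sum.
by apply: lerD; apply: sqr_le_of_norm_le; apply: le_trans (ler_norm_sum _ _ _) _;
  apply: ler_sum => j _; [apply: normr_ReM_le | apply: normr_ImM_le].
Qed.

Lemma vnorm_col_le_spnorm n (M : 'M[C]_n) j : vnorm (col j M) <= spnorm M.
Proof.
apply: ub_le_sup; first exact: unit_ball_image_ubound.
by exists (delta_mx j 0); rewrite /= ?vnorm_delta // -colE.
Qed.

Lemma spnorm1 n : (0 < n)%N -> spnorm (1%:M : 'M[C]_n) = 1.
Proof.
move=> n_gt0; pose j0 := Ordinal n_gt0.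
apply: le_anti; apply/andP; split.
  apply: ge_sup => [|_ [x x_le1 <-]]; last by rewrite mul1mx.
  by exists 1, (delta_mx j0 0); rewrite /= ?mul1mx vnorm_delta.
by have := vnorm_col_le_spnorm (1%:M : 'M[C]_n) j0; rewrite colE mul1mx vnorm_delta.
Qed.

End ComplexMatrices.

Theorem proposition3p2 (R : realType) (n : nat) (A C : 'M[R[i]]_n) :
  (0 < n)%N -> psd A -> psd C ->
  1 <= spnorm (1%:M + A *m C) /\
  (spnorm (1%:M + A *m C) = 1 <-> A *m C = 0).
Proof.
move=> n_gt0 psdA psdC; set N := A *m C.
pose g j := 2 * complex.Re (N j j) + sqnorm (col j N).
have vnorm_col j : vnorm (col j (1%:M + N)) = Num.sqrt (1 + g j).
  by rewrite vnormE sqnorm_col_add1.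
have sum_g : \sum_j g j = 2 * \sum_j complex.Re (N j j) + \sum_j sqnorm (col j N).
  by rewrite big_split mulr_sumr.
have trN_ge0 := psd_Re_mxtrace_mul_ge0 psdA psdC.
have frob_ge0 : 0 <= \sum_j sqnorm (col j N).
  by apply: sumr_ge0 => j _; apply: sqnorm_ge0.
have spnorm_ge1 : 1 <= spnorm (1%:M + N).
  have [j g_ge0] : exists j, 0 <= g j.
    by apply: (sumr_ge0_exists (Ordinal n_gt0)); rewrite sum_g; lra.
  apply: le_trans (vnorm_col_le_spnorm _ j).
  by rewrite vnorm_col -[leLHS]sqrtr1 ler_sqrt ?lerDl //; lra.
split=> //; split=> [spnorm_eq1|N_eq0]; last by rewrite N_eq0 addr0 spnorm1.
apply: frobenius_eq0; apply/eqP; rewrite eq_le frob_ge0 andbT leNgt.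
apply/negP => frob_gt0.
have [j g_gt0] : exists j, 0 < g j by apply: sumr_gt0_exists; rewrite sum_g; lra.
have := vnorm_col_le_spnorm (1%:M + N) j.
by rewrite vnorm_col spnorm_eq1 -[leRHS]sqrtr1 ler_sqrt // gerDl leNgt g_gt0.
Qed.
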